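(* Let $k\le l$ be positive integers with $\gcd(k,l)=1$, let $n\ge 1$ and $m\ge 0$ be integers, and write $m=qn+r$ with integers $q\ge 0$, $0\le r<n$. Let $x,y$ be integers satisfying $x\ge rk$, $y\ge rl$ and $qxy+r(xl+yk)\ge klnr$, chosen so that $x+y$ is the smallest possible among all such pairs. If $x+y\le nk$, then there exists $A\in\mathcal D^{k,l}(m,n)$ such that ${\rm tdet}(A)\le nkq+x+y$.
   Context: $\mathcal D^{k,l}(m,n)$ denotes the set of all $nk\times nl$ matrices with nonnegative integer entries all of whose row sums equal $ml$ and all of whose column sums equal $mk$. For an $s\times t$ matrix $A=(a_{ij})$ with $s\le t$, a transversal of $A$ is a set of entries $T=\{a_{1i_1},\dots,a_{si_s}\}$ with $i_1,\dots,i_s\in\{1,\dots,t\}$ pairwise distinct, and $|T|=a_{1i_1}+\cdots+a_{si_s}$; if $s>t$, the transversals of $A$ are those of its transpose. The tropical determinant is ${\rm tdet}(A)=\max_T|T|$ over all transversals $T$ of $A$. *)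

From mathcomp Require Import all_boot all_algebra.
Set Implicit Arguments. Unset Strict Implicit. Unset Printing Implicit Defensive.

Definition inD (k l m n : nat) (A : 'M[nat]_(n * k, n * l)) : Prop :=
  (forall i, \sum_(j < n * l) A i j = m * l) /\
  (forall j, \sum_(i < n * k) A i j = m * k).

(* Maximal weight of a transversal of an s x t matrix with s <= t:
   transversals correspond to injective maps rows -> columns. *)
Definition tdet_le (s t : nat) (A : 'M[nat]_(s, t)) : nat :=
  \max_(f : {ffun 'I_s -> 'I_t} | injectiveb f) \sum_(i < s) A i (f i).

Definition tdet (s t : nat) (A : 'M[nat]_(s, t)) : nat :=
  if s <= t then tdet_le A else tdet_le A^T.
Arguments inD : clear implicits.

From mathcomp Require Import all_boot all_algebra.
From mathcomp Require Import zify.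

Set Implicit Arguments.
Unset Strict Implicit.
Unset Printing Implicit Defensive.

(** Split the [n k] rows into a top block of [x] rows and a bottom block of
    [p = n k - x] rows.  Column [j] puts [q p + e_j] units into the bottom block
    and the rest of its sum [m k] into the top one, where the surplus [p r l] of
    the bottom rows is spread evenly over the first [y] columns, so [e_j <= p].
    Inside each block the units are dealt cyclically to its rows, which gives
    equal row sums and entries at most the ceiling of the column amount over the
    block height: [q + 1] on top, [q + (j < y)] below.  A transversal meets at
    most [x] top rows and [y] of the first columns, hence weighs at most
    [n k q + x + y].  The hypothesis [k l n r <= q x y + r (x l + y k)] is exactly
    what keeps the bottom column amounts below [m k]. *)

Lemma sum_ord_eqb n i : \sum_(j < n) (j == i :> nat : nat) = (i < n).
Proof.
transitivity (\sum_(j < n | j == i :> nat) 1).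
  by rewrite [RHS]big_mkcond; apply: eq_bigr => j _; case: eqP.
by rewrite (big_ord1_eq _ (fun=> 1)); case: ltnP.
Qed.

Definition count_mod (a len p i : nat) : nat := \sum_(a <= s < a + len) (s %% p == i).

Lemma count_modD a len1 len2 p i :
  count_mod a (len1 + len2) p i = count_mod a len1 p i + count_mod (a + len1) len2 p i.
Proof. by rewrite /count_mod addnA (@big_cat_nat _ _ _ (a + len1)) ?leq_addr. Qed.

Lemma count_mod_period a p i : 0 < p -> count_mod a p p i = (i < p).
Proof.
move=> p_gt0; elim: a => [|a IHa].
  rewrite /count_mod add0n big_mkord -sum_ord_eqb.
  by apply: eq_bigr => s _; rewrite modn_small.
have := count_modD a 1 p p i; rewrite addnC count_modD.
rewrite /count_mod !addn1 !big_nat1 -modnDmr modnn addn0 -/(count_mod _ _ _ _).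
lia.
Qed.

Lemma count_mod_mul a p b i : i < p -> count_mod a (p * b) p i = b.
Proof.
move=> lt_ip; elim: b a => [|b IHb] a; first by rewrite muln0 /count_mod addn0 big_geq.
by rewrite mulnS count_modD count_mod_period ?lt_ip ?IHb //; apply: leq_ltn_trans lt_ip.
Qed.

Lemma count_mod_le a len p b i : len <= p * b -> count_mod a len p i <= b.
Proof.
move=> le_len; case: (ltnP i p) => [lt_ip | le_pi].
  by rewrite -(count_mod_mul a b lt_ip) -(subnKC le_len) count_modD leq_addr.
case: (posnP p) => [p0 | p_gt0].
  by move: le_len; rewrite p0 mul0n leqn0 => /eqP->; rewrite /count_mod addn0 big_geq.
rewrite /count_mod big1_seq // => s _; case: eqP => // mod_s.
by have := ltn_pmod s p_gt0; rewrite mod_s ltnNge le_pi.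
Qed.

Lemma sum_count_mod a len p b : len <= p * b -> \sum_(i < p) count_mod a len p i = len.
Proof.
case: (posnP p) => [-> | p_gt0 _].
  by rewrite mul0n leqn0 big_ord0 => /eqP.
rewrite exchange_big /= (eq_bigr (fun=> 1)) => [|s _].
  by rewrite sum_nat_const_nat muln1 addKn.
rewrite (eq_bigr (fun j : 'I_p => j == s %% p :> nat : nat)) => [|j _]; last by rewrite eq_sym.
by rewrite sum_ord_eqb ltn_pmod.
Qed.

(* Column [j] gets the units numbered [D 0 + ... + D (j-1)] up to
   [D 0 + ... + D j] (excluded) of one common stream; unit [s] goes to row [s mod p]. *)
Definition cyclic_fill (p : nat) (D : nat -> nat) (i j : nat) : nat :=
  count_mod (\sum_(0 <= j' < j) D j') (D j) p i.

Lemma cyclic_fill_col_sum p D b j :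
  D j <= p * b -> \sum_(i < p) cyclic_fill p D i j = D j.
Proof. exact: sum_count_mod. Qed.

Lemma cyclic_fill_row_sum p D t w i :
  i < p -> \sum_(0 <= j < t) D j = p * w -> \sum_(j < t) cyclic_fill p D i j = w.
Proof.
move=> lt_ip sumD; rewrite -(count_mod_mul 0 w lt_ip) -sumD.
elim: t {sumD} => [|t IHt]; first by rewrite big_ord0 big_geq // /count_mod big_geq.
by rewrite big_ord_recr IHt big_nat_recr //= count_modD.
Qed.

Definition spread (e y j : nat) : nat := if j < y then count_mod 0 e y j else 0.

Lemma spread_le e y b j : e <= y * b -> spread e y j <= (j < y) * b.
Proof. by rewrite /spread; case: ltnP => // _ /(count_mod_le 0 j); rewrite mul1n. Qed.

Lemma sum_spread e y t b : y <= t -> e <= y * b -> \sum_(0 <= j < t) spread e y j = e.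
Proof.
move=> le_yt le_e; rewrite (@big_cat_nat _ _ _ y) //=.
rewrite [X in _ + X]big1_seq ?addn0 => [|j]; last first.
  by move=> /andP[_]; rewrite mem_index_iota /spread => /andP[le_yj _]; rewrite ltnNge le_yj.
rewrite big_nat_cond (eq_bigr (fun j => count_mod 0 e y j)) => [|j /andP[/andP[_ lt_jy] _]].
  by rewrite -big_nat_cond big_mkord (sum_count_mod _ le_e).
by rewrite /spread lt_jy.
Qed.

Definition two_block_entry (N x c : nat) (E : nat -> nat) (i j : nat) : nat :=
  if i < x then cyclic_fill x (fun j => c - E j) i j else cyclic_fill (N - x) E (i - x) j.

Definition two_block_fill (N t x c : nat) (E : nat -> nat) : 'M[nat]_(N, t) :=
  \matrix_(i, j) two_block_entry N x c E i j.

Section TwoBlockFill.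

Variables (N t x q w c y : nat) (E : nat -> nat).
Hypotheses (le_xN : x <= N) (NwE : N * w = t * c).
Hypotheses (sum_E : \sum_(0 <= j < t) E j = (N - x) * w) (E_le_c : forall j, E j <= c).
Hypotheses (E_le : forall j, E j <= (N - x) * (q + (j < y)))
           (c_le : forall j, c <= x * q.+1 + E j).

Let A := two_block_fill N t x c E.

Lemma two_block_fill_row_sum i : \sum_(j < t) A i j = w.
Proof.
under eq_bigr do rewrite mxE /two_block_entry.
case: ltnP => [lt_ix | le_xi]; last first.
  by apply: cyclic_fill_row_sum sum_E; rewrite ltn_sub2r // (leq_ltn_trans le_xi).
apply: cyclic_fill_row_sum => //; apply/(@addIn (\sum_(0 <= j < t) E j)).
rewrite -big_split /= (eq_bigr (fun=> c)) => [|j _]; last by rewrite subnK.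
by rewrite sum_nat_const_nat subn0 sum_E -mulnDl subnKC // NwE mulnC.
Qed.

Lemma two_block_fill_col_sum j : \sum_(i < N) A i j = c.
Proof.
have le_D : c - E j <= x * q.+1 by rewrite leq_subLR addnC.
rewrite /A /two_block_fill; under eq_bigr do rewrite mxE.
rewrite -(big_mkord xpredT (two_block_entry N x c E ^~ j)) (@big_cat_nat _ _ _ x) //=.
rewrite big_nat_cond (eq_bigr (fun i => cyclic_fill x (fun j => c - E j) i j)) => [|i]; last first.
  by case/andP=> /andP[_ lt_ix] _; rewrite /two_block_entry lt_ix.
rewrite -big_nat_cond big_mkord (@cyclic_fill_col_sum _ (fun j => c - E j) _ j le_D).
rewrite -{1}[x]add0n big_addn (eq_bigr (fun i => cyclic_fill (N - x) E i j)) => [|i _]; last first.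
  by rewrite /two_block_entry ltnNge leq_addl addnK.
by rewrite big_mkord (cyclic_fill_col_sum (E_le j)) subnK.
Qed.

Lemma two_block_fill_le i j : A i j <= q + (i < x) + (j < y).
Proof.
rewrite /A /two_block_fill mxE /two_block_entry; case: ltnP => _.
  apply: leq_trans (leq_addr _ _); rewrite addn1; apply: count_mod_le.
  by rewrite leq_subLR addnC.
by rewrite addn0; apply: count_mod_le (E_le j).
Qed.

End TwoBlockFill.

Lemma sum_bool_card (T : finType) (P : pred T) : \sum_(i : T) (P i : nat) = #|P|.
Proof. by rewrite -sum1_card [RHS]big_mkcond. Qed.

Lemma sum_ord_ltn n z : \sum_(i < n) (i < z : nat) = minn n z.
Proof.
elim: n => [|n IHn]; first by rewrite big_ord0 min0n.
by rewrite big_ord_recr /= IHn; case: ltnP; lia.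
Qed.

Lemma sum_injective_ltn s t z (f : 'I_s -> 'I_t) :
  injective f -> \sum_(i < s) (f i < z : nat) <= z.
Proof.
move=> inj_f; rewrite (sum_bool_card (fun i => f i < z)) -(card_imset _ inj_f).
apply: (@leq_trans #|[pred j : 'I_t | j < z]|).
  by apply/subset_leq_card/subsetP => _ /imsetP[i lt_fi ->].
by rewrite -sum_bool_card sum_ord_ltn geq_minr.
Qed.

Lemma tdet_le_bound s t (A : 'M[nat]_(s, t)) q x y :
  (forall i j, A i j <= q + (i < x) + (j < y)) -> tdet_le A <= s * q + x + y.
Proof.
move=> le_A; apply/bigmax_leqP => f /injectiveP inj_f.
apply: (@leq_trans (\sum_(i < s) (q + (i < x) + (f i < y)))); first exact: leq_sum.
rewrite !big_split /= sum_nat_const card_ord sum_ord_ltn.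
by rewrite -!addnA leq_add2l leq_add ?geq_minr ?sum_injective_ltn.
Qed.

Theorem proposition3p2 (k l n m q r x y : nat) :
  0 < k -> k <= l -> coprime k l -> 1 <= n ->
  m = q * n + r -> r < n ->
  r * k <= x -> r * l <= y ->
  k * l * n * r <= q * x * y + r * (x * l + y * k) ->
  (forall x' y' : nat, r * k <= x' -> r * l <= y' ->
     k * l * n * r <= q * x' * y' + r * (x' * l + y' * k) ->
     x + y <= x' + y') ->
  x + y <= n * k ->
  exists A : 'M[nat]_(n * k, n * l),
    inD k l m n A /\ tdet A <= n * k * q + x + y.
Proof.
move=> _ le_kl _ _ def_m _ le_rk_x le_rl_y weight_bound _ le_xy_nk.
set N := n * k; set M := n * l; set p := N - x.
have le_xN : x <= N by lia.
have le_NM : N <= M by rewrite leq_mul2l le_kl orbT.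
have def_N : N = x + p by rewrite subnKC.
have def_mk : m * k = q * p + (q * x + r * k) by move: def_N; rewrite /N def_m; lia.
have def_ml : m * l = q * M + r * l by rewrite def_m /M; lia.
have le_extra_p : p * (r * l) <= y * p by rewrite mulnC leq_mul2r le_rl_y orbT.
have le_extra_c : p * (r * l) <= y * (q * x + r * k).
  have : (x + p) * (r * l) <= q * x * y + r * (x * l + y * k) by rewrite -def_N /N; lia.
  nia.
pose E j := q * p + spread (p * (r * l)) y j.
have sum_E : \sum_(0 <= j < M) E j = p * (m * l).
  have le_yM : y <= M by lia.
  by rewrite big_split /= sum_nat_const_nat (sum_spread le_yM le_extra_p) def_ml; lia.
have E_le_c j : E j <= m * k.
  by have := spread_le j le_extra_c; rewrite /E def_mk; case: (j < y) => /=; lia.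
have E_le j : E j <= p * (q + (j < y)).
  by have := spread_le j le_extra_p; rewrite /E; case: (j < y) => /=; lia.
have c_le j : m * k <= x * q.+1 + E j by rewrite /E def_mk; lia.
exists (two_block_fill N M x (m * k) E); split; first split => [i|j].
- by apply: two_block_fill_row_sum E_le_c i => //; rewrite /N /M; lia.
- exact: two_block_fill_col_sum le_xN E_le_c E_le c_le j.
- by rewrite /tdet le_NM; apply/tdet_le_bound/two_block_fill_le.
Qed.
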